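(* Let $F$ be a field of characteristic different from $2$ and $3$ such that $F^2=F$. Let $K_{10}=F\cdot 1\oplus(K_3\otimes K_3)$ be the Kac Jordan superalgebra in the realization described in the context, let $W=(K_3)_{\bar 1}$ and let $V=W\otimes W\subseteq (K_{10})_{\bar 0}$ with the symmetric bilinear form $b(s\otimes t,u\otimes v)=(s|u)(t|v)$. Let $\Psi\colon \mathrm{Aut}(K_{10})\to O(V,b)$, $\varphi\mapsto\varphi|_V$. Then $\Psi$ is surjective and $\ker\Psi=\{\mathrm{id},\tau\}$, where $\tau$ is the grading automorphism, $\tau(z)=(-1)^{\bar z}z$ for homogeneous $z\in K_{10}$.
   Context: The Kaplansky superalgebra $K_3$ has even part $Fe$ and odd part $W=Fx+Fy$, with products $e^2=e$, $e x=xe=\tfrac12 x$, $e y=ye=\tfrac12 y$, $xy=e$, $yx=-e$, $x^2=y^2=0$. It carries the supersymmetric bilinear form with $(e|e)=\tfrac12$, $(x|y)=1$, $(y|x)=-1$, $(x|x)=(y|y)=0$, and even and odd parts orthogonal. $K_{10}=F\cdot 1\oplus(K_3\otimes K_3)$ is the superalgebra in which $1$ is an even identity element, $a\otimes b$ (for homogeneous $a,b\in K_3$) has parity $\bar a+\bar b$, and $(a\otimes b)(c\otimes d)=(-1)^{\bar b\bar c}\bigl(ac\otimes bd-\tfrac34(a|c)(b|d)1\bigr)$ for homogeneous $a,b,c,d\in K_3$; this is (isomorphic to) the $10$-dimensional Kac Jordan superalgebra. $\mathrm{Aut}(K_{10})$ denotes the group of automorphisms of graded algebras (grading-preserving algebra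 automorphisms); each such automorphism leaves $V$ invariant and restricts to an isometry of $(V,b)$, so $\Psi$ is a group homomorphism. $O(V,b)$ is the orthogonal group of $(V,b)$. *)

From mathcomp Require Import all_boot all_algebra.
Set Implicit Arguments. Unset Strict Implicit. Unset Printing Implicit Defensive.
Import GRing.Theory.
Local Open Scope ring_scope.

(* K_3 with basis indexed by 'I_3 : 0 = e (even), 1 = x (odd), 2 = y (odd). *)
Section Kac.
Variable F : fieldType.

Definition par (i : 'I_3) : bool := (i != 0 :> nat).

(* mK3 i k r = coefficient of basis vector r in the product b_i b_k of K_3 *)
Definition mK3 (i k r : 'I_3) : F :=
  match nat_of_ord i, nat_of_ord k, nat_of_ord r with
  | 0, 0, 0 => 1
  | 0, 1, 1 => 2^-1
  | 1, 0, 1 => 2^-1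
  | 0, 2, 2 => 2^-1
  | 2, 0, 2 => 2^-1
  | 1, 2, 0 => 1
  | 2, 1, 0 => -1
  | _, _, _ => 0
  end.

Definition fK3 (i k : 'I_3) : F :=
  match nat_of_ord i, nat_of_ord k with
  | 0, 0 => 2^-1
  | 1, 2 => 1
  | 2, 1 => -1
  | _, _ => 0
  end.

Definition sgn (j k : 'I_3) : F := if par j && par k then -1 else 1.

(* K_10 = F 1 (+) K_3 (x) K_3 ; an element is (scalar part, matrix of
   coefficients of b_i (x) b_j) *)
Record K10 := mkK10 { sc : F; tn : 'M[F]_3 }.

Definition addK (u v : K10) : K10 := mkK10 (sc u + sc v) (tn u + tn v).
Definition scaleK (c : F) (u : K10) : K10 := mkK10 (c * sc u) (c *: tn u).

(* (a 1 + sum A_ij b_i(x)b_j)(b 1 + sum B_kl b_k(x)b_l), using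
   (b_i(x)b_j)(b_k(x)b_l) = (-1)^{|j||k|} (b_i b_k (x) b_j b_l - 3/4 (b_i|b_k)(b_j|b_l) 1) *)
Definition mulK (u v : K10) : K10 :=
  mkK10
    (sc u * sc v - 3%:R / 4%:R *
       \sum_(i < 3) \sum_(j < 3) \sum_(k < 3) \sum_(l < 3)
          tn u i j * tn v k l * sgn j k * fK3 i k * fK3 j l)
    (\matrix_(r < 3, s < 3)
       (sc u * tn v r s + sc v * tn u r s +
        \sum_(i < 3) \sum_(j < 3) \sum_(k < 3) \sum_(l < 3)
          tn u i j * tn v k l * sgn j k * mK3 i k r * mK3 j l s)).

Definition evenK (u : K10) : Prop := forall i j, par i != par j -> tn u i j = 0.
Definition oddK (u : K10) : Prop := sc u = 0 /\ forall i j, par i = par j -> tn u i j = 0.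

Definition linK (f : K10 -> K10) : Prop :=
  forall c u v, f (addK (scaleK c u) v) = addK (scaleK c (f u)) (f v).

Definition is_autK (f : K10 -> K10) : Prop :=
  [/\ linK f, bijective f,
      (forall u v, f (mulK u v) = mulK (f u) (f v)),
      (forall u, evenK u -> evenK (f u)) &
      (forall u, oddK u -> oddK (f u))].

Definition tauK (u : K10) : K10 :=
  mkK10 (sc u) (\matrix_(i, j) (if par i != par j then - tn u i j else tn u i j)).

(* V = W (x) W ; coordinates of v in V : 2x2 matrix w.r.t. basis x,y of W *)
Definition embV (M : 'M[F]_2) : K10 :=
  mkK10 0 (\matrix_(i < 3, j < 3)
     match nat_of_ord i, nat_of_ord j with
     | 1, 1 => M 0 0 | 1, 2 => M 0 1 | 2, 1 => M 1 0 | 2, 2 => M 1 1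
     | _, _ => 0 end).

(* form (.|.) restricted to W, basis 0 = x, 1 = y *)
Definition fW (i k : 'I_2) : F :=
  match nat_of_ord i, nat_of_ord k with
  | 0, 1 => 1 | 1, 0 => -1 | _, _ => 0 end.

(* b(s(x)t, u(x)v) = (s|u)(t|v) *)
Definition bV (M N : 'M[F]_2) : F :=
  \sum_(i < 2) \sum_(j < 2) \sum_(k < 2) \sum_(l < 2) M i j * N k l * fW i k * fW j l.

Definition is_orthV (g : 'M[F]_2 -> 'M[F]_2) : Prop :=
  [/\ (forall c M N, g (c *: M + N) = c *: g M + g N), bijective g &
      forall M N, bV (g M) (g N) = bV M N].

End Kac.

(* The form b on V = W ⊗ W is the tensor square of the symplectic
   form of W, so b(M, M) = 2 det M and the isotropic vectors of V are the pure
   tensors a ⊗ p.  An isometry g therefore sends the four elementary tensors to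
   pure tensors, and their wedge products, dictated by b, force
   g(M) = A M B^T or g(M) = A M^T B^T with det A det B = 1; square roots let us
   take A, B in SL_2 = Sp(W).  Extended by e |-> e, such an A is an even
   automorphism of K_3 preserving (.|.), and for two of them the map 1 ⊕ (A ⊗ B)
   is an automorphism of K_10: on coordinate matrices it is U |-> A U B^T, and
   the Koszul signs do not change because A and B are even.  Together with the
   super transposition a ⊗ b |-> (-1)^{|a||b|} b ⊗ a, which is -M^T on V, these
   realise every isometry.

   An automorphism phi fixing V fixes 1 and e ⊗ e = 3/4 - (x ⊗ x)(y ⊗ y).
   The odd element phi(e ⊗ x) is killed by x ⊗ x and y ⊗ x, hence equals
   a (e ⊗ x); products with elements of V then show that phi multiplies the whole
   odd part by a, and (e ⊗ x)(e ⊗ y) = e ⊗ e - 3/8 gives a^2 = 1.  So phi is the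
   identity or tau. *)

From mathcomp Require Import all_boot all_algebra ring.
Set Implicit Arguments. Unset Strict Implicit. Unset Printing Implicit Defensive.
Import GRing.Theory.
Local Open Scope ring_scope.

Definition ie : 'I_3 := @Ordinal 3 0 isT.
Definition ix : 'I_3 := @Ordinal 3 1 isT.
Definition iy : 'I_3 := @Ordinal 3 2 isT.

Lemma ord3_ind (P : 'I_3 -> Prop) : P ie -> P ix -> P iy -> forall i, P i.
Proof.
by move=> Pe Px Py [[|[|[|n]]] lt3] //; [move: Pe | move: Px | move: Py];
  congr P; apply: val_inj.
Qed.

Lemma ord2_ind (P : 'I_2 -> Prop) : P 0 -> P 1 -> forall i, P i.
Proof.
by move=> P0 P1 [[|[|n]] lt2] //; [move: P0 | move: P1]; congr P; apply: val_inj.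
Qed.

Section FiniteSums.
Variable R : comRingType.
Implicit Types (f g : 'I_3 -> 'I_3 -> R).

Lemma big_ord3 (h : 'I_3 -> R) : \sum_(i < 3) h i = h ie + h ix + h iy.
Proof.
by rewrite !big_ord_recr big_ord0 /= add0r; congr (h _ + h _ + h _); apply: val_inj.
Qed.

Lemma big_ord2 (h : 'I_2 -> R) : \sum_(i < 2) h i = h 0 + h 1.
Proof. by rewrite !big_ord_recr big_ord0 /= add0r; congr (h _ + h _); apply: val_inj. Qed.

Lemma det22 (A : 'M[R]_2) : \det A = A 0 0 * A 1 1 - A 0 1 * A 1 0.
Proof.
rewrite (expand_det_row _ 0) !big_ord_recr big_ord0 /= /cofactor !det_mx11 !mxE /=.
have -> : lift 0 (0 : 'I_1) = 1 :> 'I_2 by apply: val_inj.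
have -> : lift (widen_ord (leqnSn 1) ord_max) (0 : 'I_1) = 1 :> 'I_2 by apply: val_inj.
have -> : lift ord_max (0 : 'I_1) = 0 :> 'I_2 by apply: val_inj.
have -> : widen_ord (leqnSn 1) ord_max = 0 :> 'I_2 by apply: val_inj.
have -> : (ord_max : 'I_2) = 1 by apply: val_inj.
by rewrite /= expr0 expr1; ring.
Qed.

Lemma sum4E (h : 'I_3 -> 'I_3 -> 'I_3 -> 'I_3 -> R) :
  \sum_(i < 3) \sum_(j < 3) \sum_(k < 3) \sum_(l < 3) h i j k l =
  \sum_(t : ('I_3 * 'I_3) * ('I_3 * 'I_3)) h t.1.1 t.1.2 t.2.1 t.2.2.
Proof. by rewrite pair_big /=; under eq_bigr do rewrite pair_big /=; rewrite pair_big. Qed.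

Lemma exchange_sum4
    (h : 'I_3 -> 'I_3 -> 'I_3 -> 'I_3 -> 'I_3 -> 'I_3 -> 'I_3 -> 'I_3 -> R) :
  \sum_(a < 3) \sum_(b < 3) \sum_(c < 3) \sum_(d < 3)
    \sum_(i < 3) \sum_(j < 3) \sum_(k < 3) \sum_(l < 3) h a b c d i j k l =
  \sum_(i < 3) \sum_(j < 3) \sum_(k < 3) \sum_(l < 3)
    \sum_(a < 3) \sum_(b < 3) \sum_(c < 3) \sum_(d < 3) h a b c d i j k l.
Proof.
rewrite sum4E; under eq_bigr do rewrite sum4E.
by rewrite exchange_big [RHS]sum4E; apply: eq_bigr => t _; rewrite sum4E.
Qed.

Lemma mulr_sum22 f g :
  (\sum_(i < 3) \sum_(j < 3) f i j) * (\sum_(k < 3) \sum_(l < 3) g k l) =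
  \sum_(i < 3) \sum_(j < 3) \sum_(k < 3) \sum_(l < 3) f i j * g k l.
Proof.
rewrite big_distrlr; apply: eq_bigr => i _ /=.
by under eq_bigr do rewrite big_distrlr /=; rewrite exchange_big.
Qed.

Lemma mulr_sum4l (h : 'I_3 -> 'I_3 -> 'I_3 -> 'I_3 -> R) r :
  (\sum_(i < 3) \sum_(j < 3) \sum_(k < 3) \sum_(l < 3) h i j k l) * r =
  \sum_(i < 3) \sum_(j < 3) \sum_(k < 3) \sum_(l < 3) h i j k l * r.
Proof.
rewrite mulr_suml; apply: eq_bigr => i _; rewrite mulr_suml; apply: eq_bigr => j _.
by rewrite mulr_suml; apply: eq_bigr => k _; rewrite mulr_suml.
Qed.

Lemma mulr_sum22_interleave s f g :
  s * (\sum_(a < 3) \sum_(c < 3) f a c) * (\sum_(b < 3) \sum_(d < 3) g b d) =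
  \sum_(a < 3) \sum_(b < 3) \sum_(c < 3) \sum_(d < 3) s * f a c * g b d.
Proof.
rewrite -mulrA mulr_sum22 mulr_sumr; apply: eq_bigr => a _.
rewrite mulr_sumr; under eq_bigr do rewrite mulr_sumr.
rewrite exchange_big; apply: eq_bigr => b _; apply: eq_bigr => c _.
by rewrite mulr_sumr; apply: eq_bigr => d _; rewrite mulrA.
Qed.

Lemma sum_delta2 (h : 'I_3 -> 'I_3 -> R) i j :
  \sum_(k < 3) \sum_(l < 3) (delta_mx i j : 'M[R]_3) k l * h k l = h i j.
Proof.
rewrite (bigD1 i) //= (bigD1 j) //= !mxE !eqxx mul1r.
rewrite big1 => [|l /negbTE nl]; last by rewrite mxE eqxx nl mul0r.
rewrite big1 => [|k /negbTE nk]; first by rewrite !addr0.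
by rewrite big1 // => l _; rewrite mxE nk mul0r.
Qed.

End FiniteSums.

Section SuperTensor.
Context {F : fieldType}.
Implicit Types (P Q U V : 'M[F]_3) (X Y : 'I_3 -> 'I_3 -> F).

(* (X ⊗ Y)(U, V) for bilinear maps X, Y on K_3 and coordinate matrices U, V of
   elements of K_3 ⊗ K_3, with the Koszul sign. *)
Definition stensor X Y U V : F :=
  \sum_(i < 3) \sum_(j < 3) \sum_(k < 3) \sum_(l < 3)
    U i j * V k l * sgn F j k * X i k * Y j l.

Definition even_mx U := forall i j, par i != par j -> U i j = 0.
Definition odd_mx U := forall i j, par i = par j -> U i j = 0.

Definition pullback P X i k : F := \sum_(p < 3) \sum_(q < 3) P p i * P q k * X p q.

Lemma sandwichE P U Q a b :
  (P *m U *m Q^T) a b = \sum_(i < 3) \sum_(j < 3) P a i * U i j * Q b j.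
Proof.
rewrite mxE exchange_big; apply: eq_bigr => j _.
by rewrite mxE big_distrl; apply: eq_bigr => i _; rewrite !mxE.
Qed.

Lemma sgn_even_mx P Q a b i k : even_mx P -> even_mx Q ->
  Q a i * P b k * sgn F a b = Q a i * P b k * sgn F i k.
Proof.
move=> eP eQ; have [ai|/eQ ->] := eqVneq (par a) (par i); last by rewrite !mul0r.
have [bk|/eP ->] := eqVneq (par b) (par k); last by rewrite mulr0 !mul0r.
by rewrite /sgn ai bk.
Qed.

Lemma stensor_sandwich P Q X Y U V : even_mx P -> even_mx Q ->
  stensor X Y (P *m U *m Q^T) (P *m V *m Q^T) =
  stensor (pullback P X) (pullback Q Y) U V.
Proof.
move=> eP eQ; rewrite /stensor /pullback.
under [RHS]eq_bigr do under eq_bigr do under eq_bigr do under eq_bigr do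
  rewrite mulr_sum22_interleave.
rewrite -exchange_sum4.
apply: eq_bigr => a _; apply: eq_bigr => b _; apply: eq_bigr => c _; apply: eq_bigr => d _.
rewrite !sandwichE -!mulrA mulrA mulr_sum22 mulr_sum4l.
apply: eq_bigr => i _; apply: eq_bigr => j _; apply: eq_bigr => k _; apply: eq_bigr => l _.
transitivity (Q b j * P c k * sgn F b c * (P a i * U i j * V k l * Q d l * X a c * Y b d)).
  by ring.
by rewrite sgn_even_mx //; ring.
Qed.

Lemma eq_stensor X X' Y Y' U V : X =2 X' -> Y =2 Y' ->
  stensor X Y U V = stensor X' Y' U V.
Proof. by move=> eX eY; do 4 (apply: eq_bigr => ? _); rewrite eX eY. Qed.

Lemma stensor_sum (c d : 'I_3 -> F) (Xs Ys : 'I_3 -> 'I_3 -> 'I_3 -> F) U V :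
  \sum_(a < 3) \sum_(b < 3) c a * stensor (Xs a) (Ys b) U V * d b =
  stensor (fun i k => \sum_(a < 3) Xs a i k * c a)
          (fun j l => \sum_(b < 3) Ys b j l * d b) U V.
Proof.
rewrite /stensor [RHS]sum4E.
under eq_bigr do under eq_bigr do rewrite sum4E mulr_sumr mulr_suml.
under eq_bigr do rewrite exchange_big.
rewrite exchange_big; apply: eq_bigr => t _.
symmetry; rewrite -mulrA big_distrlr mulr_sumr; apply: eq_bigr => a _.
by rewrite mulr_sumr; apply: eq_bigr => b _ /=; ring.
Qed.

Lemma stensor_deltal X Y i j V : stensor X Y (delta_mx i j) V =
  \sum_(k < 3) \sum_(l < 3) V k l * sgn F j k * X i k * Y j l.
Proof.
pose h a b := \sum_(k < 3) \sum_(l < 3) V k l * sgn F b k * X a k * Y b l.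
apply: (etrans _ (sum_delta2 h i j)); apply: eq_bigr => a _; apply: eq_bigr => b _.
rewrite mulr_sumr; apply: eq_bigr => k _; rewrite mulr_sumr; apply: eq_bigr => l _.
by ring.
Qed.

Lemma stensor_deltar X Y U k l : stensor X Y U (delta_mx k l) =
  \sum_(i < 3) \sum_(j < 3) U i j * sgn F j k * X i k * Y j l.
Proof.
apply: eq_bigr => i _; apply: eq_bigr => j _.
pose h a b := U i j * sgn F j a * X i a * Y j b.
apply: (etrans _ (sum_delta2 h k l)); apply: eq_bigr => a _; apply: eq_bigr => b _.
by rewrite /h; ring.
Qed.

Lemma stensor_delta X Y i j k l :
  stensor X Y (delta_mx i j) (delta_mx k l) = sgn F j k * X i k * Y j l.
Proof.
rewrite stensor_deltal; pose h a b := sgn F j a * X i a * Y j b.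
apply: (etrans _ (sum_delta2 h k l)); apply: eq_bigr => a _; apply: eq_bigr => b _.
by rewrite /h; ring.
Qed.

Lemma stensor0l X Y V : stensor X Y 0 V = 0.
Proof.
rewrite /stensor big1 // => i _; rewrite big1 // => j _; rewrite big1 // => k _.
by rewrite big1 // => l _; rewrite mxE !mul0r.
Qed.

Lemma stensor0r X Y U : stensor X Y U 0 = 0.
Proof.
rewrite /stensor big1 // => i _; rewrite big1 // => j _; rewrite big1 // => k _.
by rewrite big1 // => l _; rewrite mxE mulr0 !mul0r.
Qed.

Lemma stensorZl X Y c U V : stensor X Y (c *: U) V = c * stensor X Y U V.
Proof.
by rewrite mulrC /stensor mulr_sum4l; do 4 (apply: eq_bigr => ? _); rewrite mxE; ring.
Qed.

Lemma stensorZr X Y c U V : stensor X Y U (c *: V) = c * stensor X Y U V.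
Proof.
by rewrite mulrC /stensor mulr_sum4l; do 4 (apply: eq_bigr => ? _); rewrite mxE; ring.
Qed.

End SuperTensor.

Section K10Maps.
Context {F : fieldType}.
Implicit Types (u v : K10 F) (P Q U V : 'M[F]_3).

Definition sqform U V : F := stensor (fK3 F) (fK3 F) U V.
Definition sqmul U V : 'M[F]_3 :=
  \matrix_(r, s) stensor (fun i k => mK3 F i k r) (fun j l => mK3 F j l s) U V.

Lemma mulKE u v : mulK u v =
  mkK10 (sc u * sc v - 3%:R / 4%:R * sqform (tn u) (tn v))
        (sc u *: tn v + sc v *: tn u + sqmul (tn u) (tn v)).
Proof. by congr mkK10; apply/matrixP => r s; rewrite !mxE. Qed.

Lemma K10_ext u v : sc u = sc v -> tn u = tn v -> u = v.
Proof. by case: u v => a U [b V] /= -> ->. Qed.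

Definition K10_map (L : 'M[F]_3 -> 'M[F]_3) u := mkK10 (sc u) (L (tn u)).

Lemma K10_map_aut (L : 'M[F]_3 -> 'M[F]_3) :
  linear L -> bijective L ->
  (forall U V, sqform (L U) (L V) = sqform U V) ->
  (forall U V, L (sqmul U V) = sqmul (L U) (L V)) ->
  (forall U, even_mx U -> even_mx (L U)) ->
  (forall U, odd_mx U -> odd_mx (L U)) ->
  is_autK (K10_map L).
Proof.
move=> linL [L' LK KL] formL mulL evenL oddL.
have addL U V : L (U + V) = L U + L V by have := linL 1 U V; rewrite !scale1r.
have scaleL := scalable_linear linL.
split.
- by move=> c u v; rewrite /K10_map /= linL.
- by exists (K10_map L') => -[a U]; rewrite /K10_map /= ?LK ?KL.
- by move=> u v; rewrite !mulKE /K10_map /= formL !addL !scaleL mulL.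
- by move=> u /evenL.
- by move=> u [u0 /oddL].
Qed.

(* P acts on coordinate columns: its columns are the images of e, x, y. *)
Definition K3_auto_mx P := [/\ even_mx P,
  forall i k, pullback P (fK3 F) i k = fK3 F i k &
  forall s i k, pullback P (fun p q => mK3 F p q s) i k =
                \sum_(r < 3) mK3 F i k r * P s r].

Lemma sandwich_sqform P Q U V : K3_auto_mx P -> K3_auto_mx Q ->
  sqform (P *m U *m Q^T) (P *m V *m Q^T) = sqform U V.
Proof.
by case=> eP fP _ [eQ fQ _]; rewrite /sqform stensor_sandwich //; apply: eq_stensor.
Qed.

Lemma sandwich_sqmul P Q U V : K3_auto_mx P -> K3_auto_mx Q ->
  P *m sqmul U V *m Q^T = sqmul (P *m U *m Q^T) (P *m V *m Q^T).
Proof.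
case=> eP _ mP [eQ _ mQ]; apply/matrixP => r s.
rewrite sandwichE mxE stensor_sandwich //.
under eq_bigr do under eq_bigr do rewrite mxE.
by rewrite stensor_sum; apply: eq_stensor => i k; rewrite ?mP ?mQ.
Qed.

Lemma sandwich_parity (Pr : rel bool) P Q U : even_mx P -> even_mx Q ->
  (forall i j, ~~ Pr (par i) (par j) -> U i j = 0) ->
  forall a b, ~~ Pr (par a) (par b) -> (P *m U *m Q^T) a b = 0.
Proof.
move=> eP eQ hU a b nab; rewrite sandwichE big1 // => i _; rewrite big1 // => j _.
have [ai|/eP ->] := eqVneq (par a) (par i); last by rewrite !mul0r.
have [bj|/eQ ->] := eqVneq (par b) (par j); last by rewrite mulr0.
by rewrite hU ?mulr0 ?mul0r // -ai -bj.
Qed.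

Lemma sandwich_aut P Q : K3_auto_mx P -> K3_auto_mx Q ->
  P \in unitmx -> Q \in unitmx -> is_autK (K10_map (fun U => P *m U *m Q^T)).
Proof.
move=> KP KQ uP uQ; have [eP _ _] := KP; have [eQ _ _] := KQ.
apply: K10_map_aut.
- by move=> c U V; rewrite mulmxDr mulmxDl -scalemxAr -scalemxAl.
- exists (fun U => invmx P *m U *m (invmx Q)^T) => U.
    by rewrite !mulmxA mulVmx // mul1mx -!mulmxA -trmx_mul mulVmx // trmx1 mulmx1.
  by rewrite !mulmxA mulmxV // mul1mx -!mulmxA -trmx_mul mulmxV // trmx1 mulmx1.
- by move=> U V; apply: sandwich_sqform.
- by move=> U V; apply: sandwich_sqmul.
- by move=> U eU i j; apply: (sandwich_parity (Pr := eq_op)).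
- move=> U oU i j eij; apply: (sandwich_parity (Pr := fun x y => x != y)) => //.
    by move=> ? ? /negPn /eqP /oU.
  by rewrite eij eqxx.
Qed.

End K10Maps.

Section SuperTransposition.
Context {F : fieldType}.
Implicit Types (U V : 'M[F]_3) (X Y : 'I_3 -> 'I_3 -> F).

Lemma sgnE i k : sgn F i k = (-1) ^+ (par i && par k).
Proof. by rewrite /sgn; case: (_ && _); rewrite ?expr1 ?expr0. Qed.

Lemma fK3_even i k : par i != par k -> fK3 F i k = 0.
Proof. by case: i k => [[|[|[|?]]] ?] [[|[|[|?]]] ?]. Qed.

Lemma mK3_graded i k r : par r != par i (+) par k -> mK3 F i k r = 0.
Proof. by case: i k r => [[|[|[|?]]] ?] [[|[|[|?]]] ?] [[|[|[|?]]] ?]. Qed.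

Definition supertr U : 'M[F]_3 := \matrix_(i, j) (sgn F i j * U j i).

Lemma stensor_supertr X Y U V : stensor X Y (supertr U) (supertr V) =
  \sum_(i < 3) \sum_(j < 3) \sum_(k < 3) \sum_(l < 3)
    U i j * V k l * (sgn F j i * sgn F l k * sgn F i l) * Y i k * X j l.
Proof.
rewrite /stensor exchange_big; apply: eq_bigr => i _; apply: eq_bigr => j _.
rewrite exchange_big; apply: eq_bigr => k _; apply: eq_bigr => l _.
by rewrite !mxE; ring.
Qed.

Lemma supertr_sqform U V : sqform (supertr U) (supertr V) = sqform U V.
Proof.
rewrite /sqform stensor_supertr; apply: eq_bigr => i _; apply: eq_bigr => j _.
apply: eq_bigr => k _; apply: eq_bigr => l _.
have [ik|/fK3_even ->] := eqVneq (par i) (par k); last by rewrite !(mulr0, mul0r).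
have [jl|/fK3_even ->] := eqVneq (par j) (par l); last by rewrite !(mulr0, mul0r).
by rewrite !sgnE -ik -jl; case: (par i) (par j) => -[] /=; ring.
Qed.

(* Only the gradings of the product and of the form matter: once they are used,
   the Koszul signs agree by a parity count. *)
Lemma supertr_sqmul U V : supertr (sqmul U V) = sqmul (supertr U) (supertr V).
Proof.
apply/matrixP => r s; rewrite !mxE stensor_supertr /stensor mulr_sumr.
apply: eq_bigr => i _; rewrite mulr_sumr; apply: eq_bigr => j _.
rewrite mulr_sumr; apply: eq_bigr => k _; rewrite mulr_sumr; apply: eq_bigr => l _.
have [ikr|/mK3_graded ->] := eqVneq (par s) (par i (+) par k); last by rewrite !(mulr0, mul0r).
have [jls|/mK3_graded ->] := eqVneq (par r) (par j (+) par l); last by rewrite !(mulr0, mul0r).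
by rewrite !sgnE ikr jls; case: (par i) (par j) (par k) (par l) => -[] [] [] /=; ring.
Qed.

Lemma supertr_aut : is_autK (K10_map supertr).
Proof.
apply: K10_map_aut.
- by move=> c U V; apply/matrixP => i j; rewrite !mxE; ring.
- by exists supertr => U; apply/matrixP => i j;
    rewrite !mxE !sgnE andbC mulrA -signr_addb addbb mul1r.
- exact: supertr_sqform.
- by move=> U V; rewrite supertr_sqmul.
- by move=> U eU i j nij; rewrite mxE eU ?mulr0 // eq_sym.
- by move=> U oU i j eij; rewrite mxE oU ?mulr0.
Qed.

Lemma supertr_embV (M : 'M[F]_2) : K10_map supertr (embV M) = embV (- M^T).
Proof.
congr mkK10; apply/matrixP; apply: ord3_ind; apply: ord3_ind; rewrite !mxE /sgn /=; ring.
Qed.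

End SuperTransposition.

Section SL2Automorphisms.
Context {F : fieldType}.
Implicit Types (A B M : 'M[F]_2) (U : 'M[F]_3).

Definition diag1 A : 'M[F]_3 := \matrix_(i, j)
  match nat_of_ord i, nat_of_ord j with
  | 0, 0 => 1 | 1, 1 => A 0 0 | 1, 2 => A 0 1 | 2, 1 => A 1 0 | 2, 2 => A 1 1
  | _, _ => 0 end.

Lemma diag1_even A : even_mx (diag1 A).
Proof. by case=> [[|[|[|?]]] ?] [[|[|[|?]]] ?]; rewrite mxE. Qed.

(* The next two lemmas hold for every A, which lets [ring] prove them: \det A
   appears exactly where the relation x y = e = -(y x) and (x|y) = 1 enter. *)
Lemma pullback_diag1_form A i k :
  pullback (diag1 A) (fK3 F) i k = (if par i then \det A else 1) * fK3 F i k.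
Proof.
by move: i k; apply: ord3_ind; apply: ord3_ind;
  rewrite det22 /pullback !big_ord3 !mxE /fK3 /=; ring.
Qed.

Lemma pullback_diag1_mul A s i k :
  pullback (diag1 A) (fun p q => mK3 F p q s) i k =
  (if par i && par k then \det A else 1) * \sum_(r < 3) mK3 F i k r * diag1 A s r.
Proof.
by move: s i k; apply: ord3_ind; apply: ord3_ind; apply: ord3_ind;
  rewrite det22 /pullback !big_ord3 !mxE /mK3 /=; ring.
Qed.

Lemma diag1_K3_auto A : \det A = 1 -> K3_auto_mx (diag1 A).
Proof.
move=> dA; split; first exact: diag1_even.
  by move=> i k; rewrite pullback_diag1_form dA if_same mul1r.
by move=> s i k; rewrite pullback_diag1_mul dA if_same mul1r.
Qed.

Lemma diag1_mul A B : diag1 A *m diag1 B = diag1 (A *m B).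
Proof.
by apply/matrixP; apply: ord3_ind; apply: ord3_ind;
  rewrite !mxE big_ord3 !mxE /= ?big_ord2; ring.
Qed.

Lemma diag1_1 : diag1 1 = 1.
Proof. by apply/matrixP; apply: ord3_ind; apply: ord3_ind; rewrite !mxE. Qed.

Lemma diag1_unit A : \det A = 1 -> diag1 A \in unitmx.
Proof.
move=> dA; have [] := mulmx1_unit (A := diag1 A) (B := diag1 (\adj A)) => //.
by rewrite diag1_mul mul_mx_adj dA diag1_1.
Qed.

Definition tensK A B := K10_map (fun U => diag1 A *m U *m (diag1 B)^T).

Lemma tensK_aut A B : \det A = 1 -> \det B = 1 -> is_autK (tensK A B).
Proof.
by move=> dA dB; apply: sandwich_aut; solve [exact: diag1_K3_auto | exact: diag1_unit].
Qed.

Lemma tensK_embV A B M : tensK A B (embV M) = embV (A *m M *m B^T).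
Proof.
congr mkK10; apply/matrixP; apply: ord3_ind; apply: ord3_ind;
  by rewrite sandwichE !big_ord3 !mxE /= ?big_ord2 ?mxE /= ?big_ord2 ?mxE; ring.
Qed.

Lemma tauK_tensK u : tauK u = tensK (-1) (-1) u.
Proof.
congr mkK10; apply/matrixP; apply: ord3_ind; apply: ord3_ind;
  by rewrite sandwichE !big_ord3 !mxE /=; ring.
Qed.

End SL2Automorphisms.

Section Automorphisms.
Context {F : fieldType}.
Implicit Types (f g : K10 F -> K10 F).

Lemma aut_comp f g : is_autK f -> is_autK g -> is_autK (f \o g).
Proof.
case=> lf bf mf ef of_ [lg bg mg eg og]; split.
- by move=> c u v /=; rewrite lg lf.
- exact: bij_comp.
- by move=> u v /=; rewrite mg mf.
- by move=> u /eg /ef.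
- by move=> u /og /of_.
Qed.

Lemma aut_ext f g : f =1 g -> is_autK f -> is_autK g.
Proof.
move=> fg [lf bf mf ef of_]; split.
- by move=> c u v; rewrite -!fg lf.
- exact: (eq_bij bf fg).
- by move=> u v; rewrite -!fg mf.
- by move=> u; rewrite -fg; apply: ef.
- by move=> u; rewrite -fg; apply: of_.
Qed.

Lemma det2N (A : 'M[F]_2) : \det (- A) = \det A.
Proof. by rewrite -scaleN1r detZ sqrrN expr1n mul1r. Qed.

Lemma tau_aut : is_autK (@tauK F).
Proof.
apply: (aut_ext (f := tensK (-1) (-1))) => [u|]; first by rewrite tauK_tensK.
by apply: tensK_aut; rewrite det2N det1.
Qed.

Lemma tauK_embV (M : 'M[F]_2) : tauK (embV M) = embV M.
Proof.
by rewrite tauK_tensK tensK_embV raddfN /= trmx1 mulNmx mul1mx mulmxN mulmx1 opprK.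
Qed.

End Automorphisms.

Section OrthogonalGroup.
Context {F : fieldType}.
Implicit Types (a b c p q u v : F * F) (M : 'M[F]_2).

Lemma mulf_neq0P (x y : F) : x * y != 0 -> x != 0 /\ y != 0.
Proof. by rewrite mulf_eq0 negb_or => /andP. Qed.

Lemma mulf_eq0_neq0l (x y : F) : x * y = 0 -> x != 0 -> y = 0.
Proof. by move/eqP; rewrite mulf_eq0 => /orP[/eqP-> /eqP | /eqP]. Qed.

Definition wedge a b : F := a.1 * b.2 - a.2 * b.1.
Definition scale2 (l : F) a := (l * a.1, l * a.2).

Definition tens2 a p : 'M[F]_2 := \matrix_(i, j)
  ((match nat_of_ord i with 0 => a.1 | _ => a.2 end) *
   (match nat_of_ord j with 0 => p.1 | _ => p.2 end)).

Definition cols2 u v : 'M[F]_2 := \matrix_(i, j)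
  (match nat_of_ord j with
   | 0 => match nat_of_ord i with 0 => u.1 | _ => u.2 end
   | _ => match nat_of_ord i with 0 => v.1 | _ => v.2 end end).

Lemma bV_tens2 a p b q : bV (tens2 a p) (tens2 b q) = wedge a b * wedge p q.
Proof. by rewrite /bV !big_ord2 /fW !mxE /wedge /=; ring. Qed.

Lemma bV_self M : bV M M = 2%:R * \det M.
Proof. by rewrite det22 /bV !big_ord2 /fW /=; ring. Qed.

Lemma bV_delta (i j k l : 'I_2) :
  bV (delta_mx i j : 'M[F]_2) (delta_mx k l) = fW F i k * fW F j l.
Proof.
move: i j k l; apply: ord2_ind; apply: ord2_ind; apply: ord2_ind; apply: ord2_ind;
  by rewrite /bV !big_ord2 !mxE /fW /=; ring.
Qed.

Lemma tens2_tr a p : (tens2 a p)^T = tens2 p a.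
Proof. by apply/matrixP; apply: ord2_ind; apply: ord2_ind; rewrite !mxE /=; ring. Qed.

Lemma tens2Zl k a p : tens2 (scale2 k a) p = k *: tens2 a p.
Proof. by apply/matrixP; apply: ord2_ind; apply: ord2_ind; rewrite !mxE /=; ring. Qed.

Lemma tens2Zr k a p : tens2 a (scale2 k p) = k *: tens2 a p.
Proof. by apply/matrixP; apply: ord2_ind; apply: ord2_ind; rewrite !mxE /=; ring. Qed.

Lemma det_cols2 u v : \det (cols2 u v) = wedge u v.
Proof. by rewrite det22 !mxE /wedge /=; ring. Qed.

Lemma tens2_frame u0 u1 v0 v1 M :
  M 0 0 *: tens2 u0 v0 + M 0 1 *: tens2 u0 v1 + M 1 0 *: tens2 u1 v0
    + M 1 1 *: tens2 u1 v1 = cols2 u0 u1 *m M *m (cols2 v0 v1)^T.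
Proof.
by apply/matrixP; apply: ord2_ind; apply: ord2_ind;
  rewrite !mxE !big_ord2 !mxE !big_ord2 !mxE /=; ring.
Qed.

Lemma tens2_frame_tr u0 u1 v0 v1 M :
  M 0 0 *: tens2 u0 v0 + M 0 1 *: tens2 u1 v0 + M 1 0 *: tens2 u0 v1
    + M 1 1 *: tens2 u1 v1 = cols2 u0 u1 *m M^T *m (cols2 v0 v1)^T.
Proof.
by apply/matrixP; apply: ord2_ind; apply: ord2_ind;
  rewrite !mxE !big_ord2 !mxE !big_ord2 !mxE /=; ring.
Qed.

Lemma det0_tens2 M : \det M = 0 -> exists a p, M = tens2 a p.
Proof.
rewrite det22 => /eqP; rewrite subr_eq0 => /eqP d.
have [m00|m00] := eqVneq (M 0 0) 0.
  have [m01|m01] := eqVneq (M 0 1) 0.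
    exists (0, 1), (M 1 0, M 1 1).
    by apply/matrixP; apply: ord2_ind; apply: ord2_ind; rewrite !mxE /= ?m00 ?m01; ring.
  have m10 : M 1 0 = 0 by apply: (mulfI m01); rewrite mulr0 -d m00 mul0r.
  exists (M 0 1, M 1 1), (0, 1).
  by apply/matrixP; apply: ord2_ind; apply: ord2_ind; rewrite !mxE /= ?m00 ?m10; ring.
exists (M 0 0, M 1 0), (1, M 0 1 / M 0 0).
apply/matrixP; apply: ord2_ind; apply: ord2_ind; rewrite !mxE /=; try by field.
by apply: (mulfI m00); rewrite d; field.
Qed.

Lemma wedge0_collinear a b c :
  wedge a b = 0 -> wedge a c != 0 -> exists l, b = scale2 l a.
Proof.
case: a b c => [a1 a2] [b1 b2] [c1 c2]; rewrite /wedge /scale2 /= => ab ac.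
have [a10|a10] := eqVneq a1 0.
  have a20 : a2 != 0 by apply: contraNneq ac => a20; rewrite a10 a20 !mul0r subrr.
  have b10 : b1 = 0.
    apply: (mulfI a20); move: ab; rewrite a10 mul0r sub0r mulr0 => /eqP.
    by rewrite oppr_eq0 => /eqP.
  by exists (b2 / a2); congr pair; [rewrite a10 b10 mulr0 | field].
exists (b1 / a1); congr pair; first by field.
by apply: (mulfI a10); move/eqP: ab; rewrite subr_eq0 => /eqP ->; field.
Qed.

(* a_ij ⊗ p_ij stand for the images of the elementary tensors E_ij; the
   hypotheses are their Gram relations, in the case wedge a00 a01 = 0. *)
Lemma tensor_frame a00 a01 a10 a11 p00 p01 p10 p11 :
  wedge a00 a11 * wedge p00 p11 = 1 -> wedge a01 a10 * wedge p01 p10 = -1 ->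
  wedge a00 a10 * wedge p00 p10 = 0 -> wedge a01 a11 * wedge p01 p11 = 0 ->
  wedge a10 a11 * wedge p10 p11 = 0 -> wedge a00 a01 = 0 ->
  exists u0 u1 v0 v1,
    [/\ tens2 a00 p00 = tens2 u0 v0, tens2 a01 p01 = tens2 u0 v1,
        tens2 a10 p10 = tens2 u1 v0 & tens2 a11 p11 = tens2 u1 v1].
Proof.
move=> E1 E2 E4 E5 E6 H.
have [nA nP] : wedge a00 a11 != 0 /\ wedge p00 p11 != 0.
  by apply: mulf_neq0P; rewrite E1 oner_eq0.
have [l e01] := wedge0_collinear H nA; subst a01.
have e2 : l * (wedge a00 a10 * wedge p01 p10) = -1 by rewrite -E2 /wedge /scale2 /=; ring.
have [nl /mulf_neq0P [na nq]] : l != 0 /\ wedge a00 a10 * wedge p01 p10 != 0.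
  by apply: mulf_neq0P; rewrite e2 oppr_eq0 oner_eq0.
have [m e10] := wedge0_collinear (mulf_eq0_neq0l E4 na) nP; subst p10.
have e5 : wedge p01 p11 = 0.
  apply: (mulf_eq0_neq0l (x := l * wedge a00 a11)); last by rewrite mulf_neq0.
  by rewrite -E5 /wedge /scale2 /=; ring.
have [n e11] := wedge0_collinear e5 nq; subst p11.
have e1 : n * (wedge a00 a11 * wedge p00 p01) = 1 by rewrite -E1 /wedge /scale2 /=; ring.
have [nn /mulf_neq0P [_ npp]] : n != 0 /\ wedge a00 a11 * wedge p00 p01 != 0.
  by apply: mulf_neq0P; rewrite e1 oner_eq0.
have nm : m != 0.
  by apply: contraNneq nq => m0; rewrite /wedge /scale2 /= m0 !(mul0r, mulr0) subrr.
have e6 : wedge a10 a11 = 0.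
  apply: (mulf_eq0_neq0l (x := m * n * wedge p00 p01)); last by rewrite !mulf_neq0.
  by rewrite -E6 /wedge /scale2 /=; ring.
have na' : wedge a10 a00 != 0.
  by rewrite (_ : wedge a10 a00 = - wedge a00 a10) ?oppr_eq0 // /wedge; ring.
have [k e11] := wedge0_collinear e6 na'; subst a11.
pose X := wedge a00 a10 * wedge p00 p01.
have eA : k * n * X = 1 by rewrite -E1 /X /wedge /scale2 /=; ring.
have eB : l * m * X = 1 by rewrite -(opprK 1) -E2 /X /wedge /scale2 /=; ring.
have kn : k * n = l * m.
  by rewrite -[k * n]mulr1 -eB mulrCA (mulrC (l * m)) mulrA eA mul1r.
exists a00, (scale2 m a10), p00, (scale2 l p01); split => //.
- by rewrite tens2Zl tens2Zr.
- by rewrite tens2Zl tens2Zr.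
- by rewrite tens2Zl tens2Zr scalerA kn mulrC tens2Zl tens2Zr scalerA.
Qed.

Lemma tens2_trE a p u v : tens2 p a = tens2 u v -> tens2 a p = tens2 v u.
Proof. by move=> h; rewrite -tens2_tr h tens2_tr. Qed.

Hypothesis two_neq0 : (2%:R : F) != 0.

Lemma orth_decomposition (g : 'M[F]_2 -> 'M[F]_2) : is_orthV g ->
  exists A B : 'M[F]_2, \det A * \det B = 1 /\
    ((forall M, g M = A *m M *m B^T) \/ (forall M, g M = A *m M^T *m B^T)).
Proof.
case=> lin _ pres.
have addg M N : g (M + N) = g M + g N by have := lin 1 M N; rewrite !scale1r.
have scaleg := scalable_linear lin.
have gexp M : g M = M 0 0 *: g (delta_mx 0 0) + M 0 1 *: g (delta_mx 0 1)
                  + M 1 0 *: g (delta_mx 1 0) + M 1 1 *: g (delta_mx 1 1).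
  rewrite -!scaleg -!addg; congr g.
  by apply/matrixP; apply: ord2_ind; apply: ord2_ind; rewrite !mxE /=; ring.
have gram i j k l : bV (g (delta_mx i j)) (g (delta_mx k l)) = fW F i k * fW F j l.
  by rewrite pres bV_delta.
have pure i j : exists a p, g (delta_mx i j) = tens2 a p.
  apply: det0_tens2; apply: (mulfI two_neq0); rewrite mulr0 -bV_self gram.
  by move: i j; apply: ord2_ind; apply: ord2_ind; rewrite /fW /= mulr0.
have [a00 [p00 e00]] := pure 0 0; have [a01 [p01 e01]] := pure 0 1.
have [a10 [p10 e10]] := pure 1 0; have [a11 [p11 e11]] := pure 1 1.
have wedges i j k l a p b q :
    g (delta_mx i j) = tens2 a p -> g (delta_mx k l) = tens2 b q ->
    wedge a b * wedge p q = fW F i k * fW F j l.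
  by move=> eij ekl; rewrite -bV_tens2 -eij -ekl gram.
have E1 := wedges _ _ _ _ _ _ _ _ e00 e11; have E2 := wedges _ _ _ _ _ _ _ _ e01 e10.
have E3 := wedges _ _ _ _ _ _ _ _ e00 e01; have E4 := wedges _ _ _ _ _ _ _ _ e00 e10.
have E5 := wedges _ _ _ _ _ _ _ _ e01 e11; have E6 := wedges _ _ _ _ _ _ _ _ e10 e11.
rewrite /fW /= ?(mulr1, mul1r, mulr0, mul0r, mulrN1) in E1 E2 E3 E4 E5 E6.
move/eqP: E3; rewrite mulf_eq0 => /orP[/eqP H|/eqP H].
  have [u0 [u1 [v0 [v1 [h00 h01 h10 h11]]]]] := tensor_frame E1 E2 E4 E5 E6 H.
  exists (cols2 u0 u1), (cols2 v0 v1); split.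
    by rewrite !det_cols2 -bV_tens2 -h00 -h11 -e00 -e11 gram /fW /= mulr1.
  by left => M; rewrite gexp e00 e01 e10 e11 h00 h01 h10 h11 tens2_frame.
have [u0 [u1 [v0 [v1 [h00 h01 h10 h11]]]]] :=
  tensor_frame (etrans (mulrC _ _) E1) (etrans (mulrC _ _) E2) (etrans (mulrC _ _) E4)
               (etrans (mulrC _ _) E5) (etrans (mulrC _ _) E6) H.
move/tens2_trE: h00 => h00; move/tens2_trE: h01 => h01.
move/tens2_trE: h10 => h10; move/tens2_trE: h11 => h11.
exists (cols2 v0 v1), (cols2 u0 u1); split.
  by rewrite !det_cols2 -bV_tens2 -h00 -h11 -e00 -e11 gram /fW /= mulr1.
by right => M; rewrite gexp e00 e01 e10 e11 h00 h01 h10 h11 tens2_frame_tr.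
Qed.

Hypothesis square_roots : forall x : F, exists y : F, y * y = x.

Lemma SL2_rescale A B : \det A * \det B = 1 -> exists A' B' : 'M[F]_2,
  [/\ \det A' = 1, \det B' = 1 & forall M, A' *m M *m B'^T = A *m M *m B^T].
Proof.
move=> dAB; have [s sB] := square_roots (\det B).
have [_ nB] : \det A != 0 /\ \det B != 0 by apply: mulf_neq0P; rewrite dAB oner_eq0.
have ns : s != 0 by apply: contraNneq nB => s0; rewrite -sB s0 mul0r.
have detZ2 (k : F) (C : 'M[F]_2) : \det (k *: C) = k * k * \det C.
  by rewrite detZ expr2.
exists (s *: A), (s^-1 *: B); split.
- by rewrite detZ2 sB mulrC dAB.
- by rewrite detZ2 -sB; field.
- by move=> M; rewrite linearZ /= -!scalemxAl -scalemxAr scalerA divff // scale1r.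
Qed.

End OrthogonalGroup.

Section K10Arithmetic.
Context {F : fieldType}.
Implicit Types (u v : K10 F).

Definition oneK : K10 F := mkK10 1 0.
Definition zeroK : K10 F := mkK10 0 0.
Definition basK i j : K10 F := mkK10 0 (delta_mx i j).

Lemma mul1K u : mulK oneK u = u.
Proof.
apply: K10_ext; rewrite mulKE /=; first by rewrite /sqform stensor0l; ring.
by apply/matrixP => r s; rewrite !mxE stensor0l; ring.
Qed.

Lemma mulK1 u : mulK u oneK = u.
Proof.
apply: K10_ext; rewrite mulKE /=; first by rewrite /sqform stensor0r; ring.
by apply/matrixP => r s; rewrite !mxE stensor0r; ring.
Qed.

Lemma mulKZl c u v : mulK (scaleK c u) v = scaleK c (mulK u v).
Proof.
rewrite !mulKE /scaleK /sqform /= stensorZl; congr mkK10; first by ring.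
by apply/matrixP => r s; rewrite !mxE stensorZl; ring.
Qed.

Lemma mulKZr c u v : mulK u (scaleK c v) = scaleK c (mulK u v).
Proof.
rewrite !mulKE /scaleK /sqform /= stensorZr; congr mkK10; first by ring.
by apply/matrixP => r s; rewrite !mxE stensorZr; ring.
Qed.

Lemma mulK_basK i j k l : mulK (basK i j) (basK k l) =
  mkK10 (- (3%:R / 4%:R) * (sgn F j k * fK3 F i k * fK3 F j l))
        (\matrix_(r, s) (sgn F j k * mK3 F i k r * mK3 F j l s)).
Proof.
rewrite mulKE /sqform stensor_delta /=; congr mkK10; first by ring.
by apply/matrixP => r s; rewrite !mxE stensor_delta !mul0r !add0r.
Qed.

Lemma tn_mulK_basK D k l r s : sc D = 0 -> tn (mulK D (basK k l)) r s =
  \sum_(i < 3) \sum_(j < 3) tn D i j * sgn F j k * mK3 F i k r * mK3 F j l s.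
Proof. by move=> D0; rewrite mulKE D0 /= !mxE stensor_deltar !mul0r !add0r. Qed.

Lemma scaleK_comm c d u : scaleK c (scaleK d u) = scaleK d (scaleK c u).
Proof. by case: u => a U; rewrite /scaleK /= mulrCA !scalerA (mulrC c d). Qed.

Lemma scale1K u : scaleK 1 u = u.
Proof. by case: u => a U; rewrite /scaleK /= mul1r scale1r. Qed.

Lemma addK0 u : addK u zeroK = u.
Proof. by case: u => a U; rewrite /addK /= !addr0. Qed.

Section Linear.
Variable f : K10 F -> K10 F.
Hypothesis linf : linK f.

Lemma linK_add u v : f (addK u v) = addK (f u) (f v).
Proof. by rewrite -[u]scale1K linf !scale1K. Qed.

Lemma linK_zero : f zeroK = zeroK.
Proof.
have := linK_add zeroK zeroK; rewrite addK0; case: (f zeroK) => a U [e1 e2].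
by congr mkK10; [apply: (addrI a); rewrite -e1 addr0 | apply: (addrI U); rewrite -e2 addr0].
Qed.

Lemma linK_scale c u : f (scaleK c u) = scaleK c (f u).
Proof. by rewrite -[scaleK c u]addK0 linf linK_zero addK0. Qed.

End Linear.

Definition basis_idx : seq ('I_3 * 'I_3) :=
  [seq (i, j) | i <- [:: ie; ix; iy], j <- [:: ie; ix; iy]].

Lemma K10_expand z :
  z = foldr (fun ij w => addK (scaleK (tn z ij.1 ij.2) (basK ij.1 ij.2)) w)
            (scaleK (sc z) oneK) basis_idx.
Proof.
apply: K10_ext => /=; first by ring.
by apply/matrixP; apply: ord3_ind; apply: ord3_ind; rewrite !mxE /=; ring.
Qed.

Lemma K10_lin_ext (f g : K10 F -> K10 F) : linK f -> linK g ->
  f oneK = g oneK -> (forall i j, f (basK i j) = g (basK i j)) -> f =1 g.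
Proof.
move=> lf lg f1 fb z; rewrite (K10_expand z); elim: basis_idx => /= [|ij s IH].
  by rewrite (linK_scale lf) (linK_scale lg) f1.
by rewrite (linK_add lf) (linK_add lg) (linK_scale lf) (linK_scale lg) IH fb.
Qed.

Lemma basK_embV i j : par i -> par j -> exists M, basK i j = embV M.
Proof.
move: i j; apply: ord3_ind => //; apply: ord3_ind => // _ _;
  [exists (delta_mx 0 0) | exists (delta_mx 0 1) | exists (delta_mx 1 0)
  | exists (delta_mx 1 1)];
  by congr mkK10; apply/matrixP; apply: ord3_ind; apply: ord3_ind; rewrite !mxE.
Qed.

Lemma aut_oneK (phi : K10 F -> K10 F) : is_autK phi -> phi oneK = oneK.
Proof.
case=> _ [psi _ psiK] mul _ _.
have unit w : mulK (phi oneK) w = w by rewrite -(psiK w) -mul mul1K.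
by rewrite -[RHS](unit oneK) mulK1.
Qed.

Lemma tauK_basK i j :
  tauK (basK i j) = scaleK (if par i != par j then -1 else 1) (basK i j).
Proof.
apply: K10_ext => /=; first by rewrite mulr0.
apply/matrixP => a b; rewrite !mxE.
have [/andP[/eqP-> /eqP->]|_] := boolP ((a == i) && (b == j)).
  by case: ifP; rewrite /= ?mulr1.
by case: ifP; rewrite /= ?mulr0 ?oppr0.
Qed.

End K10Arithmetic.

Section Kernel.
Context {F : fieldType}.
Hypothesis two_neq0 : (2%:R : F) != 0.
Local Notation basK := (@basK F).

Let four_neq0 : (4%:R : F) != 0.
Proof. by rewrite (natrM _ 2 2) mulf_neq0. Qed.

Let eight_neq0 : (8%:R : F) != 0.
Proof. by rewrite (natrM _ 2 4) mulf_neq0. Qed.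

Let half_eq0 (x : F) : (x / 2%:R == 0) = (x == 0).
Proof. by rewrite mulf_eq0 invr_eq0 (negbTE two_neq0) orbF. Qed.

Ltac basK_compute := rewrite ?mulK_basK; apply: K10_ext => /=;
  [| apply/matrixP; apply: ord3_ind; apply: ord3_ind; rewrite !mxE];
  rewrite /sgn /fK3 /mK3 /= ?(mulr0, mul0r);
  try (field; rewrite ?two_neq0 ?four_neq0 ?eight_neq0).

Lemma basK_ee : basK ie ie = addK (scaleK (3%:R / 4%:R) oneK)
                                  (scaleK (-1) (mulK (basK ix ix) (basK iy iy))).
Proof. by basK_compute. Qed.

Lemma mulK_ex_xx : mulK (basK ie ix) (basK ix ix) = zeroK.
Proof. by basK_compute. Qed.

Lemma mulK_ex_yx : mulK (basK ie ix) (basK iy ix) = zeroK.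
Proof. by basK_compute. Qed.

Lemma basK_xe : basK ix ie = scaleK (- 2%:R) (mulK (basK ie ix) (basK ix iy)).
Proof. by basK_compute. Qed.

Lemma basK_ye : basK iy ie = scaleK (- 2%:R) (mulK (basK ie ix) (basK iy iy)).
Proof. by basK_compute. Qed.

Lemma basK_ey : basK ie iy = scaleK 2%:R (mulK (basK ix ie) (basK iy iy)).
Proof. by basK_compute. Qed.

Lemma mulK_ex_ey : mulK (basK ie ix) (basK ie iy) =
  addK (scaleK (- (3%:R / 8%:R)) oneK) (basK ie ie).
Proof. by basK_compute. Qed.

Lemma odd_annihilated (D : K10 F) : oddK D ->
  mulK D (basK ix ix) = zeroK -> mulK D (basK iy ix) = zeroK ->
  D = scaleK (tn D ie ix) (basK ie ix).
Proof.
case=> D0 Dodd h1 h2.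
have half_coef B r s i j : mulK D B = zeroK ->
    tn (mulK D B) r s = tn D i j / 2%:R \/ tn (mulK D B) r s = - (tn D i j / 2%:R) ->
    tn D i j = 0.
  by move=> -> [] /esym/eqP; rewrite mxE ?oppr_eq0 half_eq0 => /eqP.
have Dey : tn D ie iy = 0.
  apply: (half_coef _ ix ie _ _ h1); left.
  by rewrite tn_mulK_basK // !big_ord3 /sgn /mK3 /=; ring.
have Dye : tn D iy ie = 0.
  apply: (half_coef _ ie ix _ _ h1); right.
  by rewrite tn_mulK_basK // !big_ord3 /sgn /mK3 /=; ring.
have Dxe : tn D ix ie = 0.
  apply: (half_coef _ ie ix _ _ h2); left.
  by rewrite tn_mulK_basK // !big_ord3 /sgn /mK3 /=; ring.
apply: K10_ext; first by rewrite D0 /= mulr0.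
apply/matrixP; apply: ord3_ind; apply: ord3_ind;
  by rewrite !mxE /= ?mulr1 ?mulr0 ?Dey ?Dye ?Dxe //; apply: Dodd.
Qed.

Lemma aut_fixing_V_basK (phi : K10 F -> K10 F) :
  is_autK phi -> (forall M, phi (embV M) = embV M) ->
  exists2 a, a * a = 1 &
    forall i j, phi (basK i j) = scaleK (if par i != par j then a else 1) (basK i j).
Proof.
move=> aut_phi fixV; have phi1 := aut_oneK aut_phi.
case: aut_phi => lin _ mul _ odd.
have fixWW i j : par i -> par j -> phi (basK i j) = basK i j.
  by move=> pi pj; have [M ->] := basK_embV (F := F) pi pj; apply: fixV.
have phi_ee : phi (basK ie ie) = basK ie ie.
  by rewrite {1}basK_ee (linK_add lin) !(linK_scale lin) phi1 mul !fixWW // -basK_ee.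
set a := tn (phi (basK ie ix)) ie ix.
have phi_ex : phi (basK ie ix) = scaleK a (basK ie ix).
  apply: odd_annihilated.
  - by apply: odd; split => //; apply: ord3_ind; apply: ord3_ind; rewrite ?mxE.
  - by rewrite -(fixWW ix ix) // -mul mulK_ex_xx (linK_zero lin).
  - by rewrite -(fixWW iy ix) // -mul mulK_ex_yx (linK_zero lin).
have phi_xe : phi (basK ix ie) = scaleK a (basK ix ie).
  by rewrite {1}basK_xe (linK_scale lin) mul phi_ex fixWW // mulKZl scaleK_comm -basK_xe.
have phi_ye : phi (basK iy ie) = scaleK a (basK iy ie).
  by rewrite {1}basK_ye (linK_scale lin) mul phi_ex fixWW // mulKZl scaleK_comm -basK_ye.
have phi_ey : phi (basK ie iy) = scaleK a (basK ie iy).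
  by rewrite {1}basK_ey (linK_scale lin) mul phi_xe fixWW // mulKZl scaleK_comm -basK_ey.
exists a.
  have := congr1 phi mulK_ex_ey; rewrite mul phi_ex phi_ey mulKZl mulKZr.
  rewrite (linK_add lin) (linK_scale lin) phi1 phi_ee -mulK_ex_ey.
  move/(congr1 (fun w => tn w ie ie)); rewrite mulK_basK /= !mxE /mK3 /sgn /=.
  by rewrite !mulr1.
by apply: ord3_ind; apply: ord3_ind;
  rewrite /= ?scale1K ?phi_ee ?phi_ex ?phi_ey ?phi_xe ?phi_ye ?fixWW.
Qed.

Theorem aut_fixing_V (phi : K10 F -> K10 F) :
  is_autK phi -> (forall M, phi (embV M) = embV M) ->
  (forall z, phi z = z) \/ (forall z, phi z = tauK z).
Proof.
move=> aut_phi fixV; have [a a2 phi_basK] := aut_fixing_V_basK aut_phi fixV.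
have [lin _ _ _ _] := aut_phi; have phi1 := aut_oneK aut_phi.
have /eqP : (a - 1) * (a + 1) = 0 by rewrite mulrDr !mulrBl a2; ring.
rewrite mulf_eq0 subr_eq0 addr_eq0 => /orP[/eqP a1|/eqP an1].
  by left; apply: K10_lin_ext => // i j; rewrite phi_basK a1 if_same scale1K.
right; apply: K10_lin_ext => //; first by case: (@tau_aut F).
  rewrite phi1; apply: K10_ext => //=.
  by apply/matrixP => i j; rewrite !mxE; case: ifP; rewrite ?oppr0.
by move=> i j; rewrite phi_basK tauK_basK an1.
Qed.

End Kernel.

Unset Implicit Arguments.

Theorem lemma3p2 (F : fieldType)
  (h2 : (2%:R : F) != 0) (h3 : (3%:R : F) != 0)
  (hsq : forall a : F, exists b : F, b * b = a) :
  (* Psi is surjective *)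
  (forall g : 'M[F]_2 -> 'M[F]_2, is_orthV g ->
     exists phi : K10 F -> K10 F, is_autK phi /\
       forall M, phi (embV M) = embV (g M)) /\
  (* ker Psi = {id, tau} *)
  is_autK (@tauK F) /\
  (forall phi : K10 F -> K10 F, is_autK phi ->
     ((forall M, phi (embV M) = embV M) <->
      ((forall z, phi z = z) \/ (forall z, phi z = tauK z)))).
Proof.
split.
  move=> g og.
  have [A [B [dAB gE]]] := orth_decomposition h2 og.
  have [A' [B' [dA' dB' eAB]]] := SL2_rescale hsq dAB.
  case: gE => gE.
    exists (tensK A' B'); split; first exact: tensK_aut.
    by move=> M; rewrite tensK_embV eAB gE.
  exists (tensK (- A') B' \o K10_map supertr); split.
    by apply: aut_comp; [apply: tensK_aut; rewrite ?det2N | exact: supertr_aut].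
  by move=> M /=; rewrite supertr_embV tensK_embV mulNmx mulmxN opprK eAB gE.
split; first exact: tau_aut.
move=> phi aphi; split; first exact: aut_fixing_V.
by case=> phiE M; rewrite phiE // tauK_embV.
Qed.
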